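(* Let $q\in\mathbb{C}\setminus\{0\}$, let $P,f\in\mathbb{C}[x^{-1}][[x]]$ with $P\ne0$ satisfy $x\sigma_qf+f=P$, and let $n,k$ be integers with $1\le k\le n$. For $0\le j\le k$ set $$A_{k;j}=\prod_{\substack{0\le \ell\le k\\ \ell\ne j}}(P_j-P_\ell)\in\mathbb{C}[x^{-1}][[x]].$$ Then $$L_{n,k}^P(f^n)=(-1)^{k(2n-k+1)/2}\sum_{j=0}^{k}\frac{1}{A_{k;j}}\,(f-P_j)^n .$$
   Context: $\mathbb{C}[x^{-1}][[x]]$ is the field of formal Laurent series; $\sigma_qf(x)=f(qx)$; field elements act as multiplication operators and products of operators are compositions. $P_0=0$, $P_1=P$, $P_m=\sum_{k=0}^{m-1}(-x\sigma_q)^kP$ for $m\ge2$; the $P_m$ are pairwise distinct, so $A_{k;j}\neq0$. The operators $L_{n,k}^P$ are defined by $L_{n,1}^P=\frac{1}{P_1}\left(x^n\sigma_q-(-1)^n\right)$ and $L_{n,k+1}^P=\frac{1}{P_{k+1}}\left(x^{n-k}\sigma_q-(-1)^{n-k}\right)L_{n,k}^P$ for $1\le k<n$. *)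

(* Formal Laurent series over a field K, represented as
   coefficient functions int -> K (coefficient of x^n at n), with the
   Laurent condition "support bounded below" imposed as a hypothesis. *)
From HB Require Import structures.
From mathcomp Require Import all_boot all_order all_algebra complex.
From mathcomp Require Import Rstruct.
From Stdlib Require Import ClassicalEpsilon.
Set Implicit Arguments. Unset Strict Implicit. Unset Printing Implicit Defensive.
Import Order.TTheory GRing.Theory Num.Theory.
Local Open Scope ring_scope.

Notation Cplx := (complex Rdefinitions.R).

Section Laurent.
Variable K : fieldType.

Definition lseries := int -> K.

Definition is_laurent (f : lseries) : Prop :=
  exists N : int, forall n : int, n < N -> f n = 0.

Definition lbound (f : lseries) : int :=
  match excluded_middle_informative (is_laurent f) with
  | left H => proj1_sig (constructive_indefinite_description _ H)
  | right _ => 0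
  end.

Definition lzero : lseries := fun _ => 0.
Definition lconst (c : K) : lseries := fun n => if n == 0 then c else 0.
Definition lone : lseries := lconst 1.
Definition lxpow (m : int) : lseries := fun n => if n == m then 1 else 0.
Definition lX : lseries := lxpow 1.

Definition ladd (f g : lseries) : lseries := fun n => f n + g n.
Definition lopp (f : lseries) : lseries := fun n => - f n.
Definition lscale (c : K) (f : lseries) : lseries := fun n => c * f n.

Definition lmul (f g : lseries) : lseries := fun n =>
  let a := lbound f in let b := lbound g in
  if a + b <= n then
    \sum_(i < (absz (n - a - b)%R).+1) f (a + i%:Z) * g (n - a - i%:Z)
  else 0.

(* multiplicative inverse in the field of Laurent series (0 for 0) *)
Definition linv (f : lseries) : lseries :=
  match excluded_middle_informative
          (exists g, is_laurent g /\ lmul f g = lone) with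
  | left H => proj1_sig (constructive_indefinite_description _ H)
  | right _ => lzero
  end.

Definition lpow (f : lseries) (m : nat) : lseries := iter m (lmul f) lone.

(* sigma_q f (x) = f (q x) *)
Definition lsigma (q : K) (f : lseries) : lseries := fun n => q ^ n * f n.

Definition lnegxsigma (q : K) (f : lseries) : lseries := lopp (lmul lX (lsigma q f)).

Definition Pm (q : K) (P : lseries) (m : nat) : lseries :=
  match m with
  | 0 => lzero
  | 1 => P
  | _ => \big[ladd/lzero]_(k < m) iter k (lnegxsigma q) P
  end.

Definition Lstep (q : K) (P : lseries) (n j : nat) (y : lseries) : lseries :=
  lmul (linv (Pm q P j.+1))
       (ladd (lmul (lxpow (n - j)%N%:Z) (lsigma q y))
             (lopp (lscale ((-1) ^+ (n - j)) y))).

Fixpoint Lop (q : K) (P : lseries) (n k : nat) (y : lseries) : lseries :=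
  match k with
  | 0 => y
  | k'.+1 => Lstep q P n k' (Lop q P n k' y)
  end.

Definition Akj (q : K) (P : lseries) (k j : nat) : lseries :=
  \big[lmul/lone]_(l < k.+1 | (l : nat) != j) ladd (Pm q P j) (lopp (Pm q P l)).

End Laurent.

(* The identity is pure algebra in a field [L] with a ring endomorphism [s]
   (standing for sigma_q) and an element [X != 0] (standing for x).  Writing
   [g_j = (-X s)^j F], the relation [X s F + F = P] makes the sum defining
   [P_j] telescope to [P_j = F - g_j], and [X s] maps [g_j] to [-g_{j+1}] and
   [A_{k;j}] to [+-A_{k+1;j+1} / (X^k P_{j+1})].  Hence [X^(n-k) s] sends the
   rank-[k] partial fraction sum to the rank-[k+1] one weighted by [P_i], and a
   partial fraction identity closes the induction on [k] (section
   [OperatorIdentity]).  The only hypothesis on the data is that the [P_j] are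
   pairwise distinct. *)

From HB Require Import structures.
From mathcomp Require Import all_boot all_order all_algebra complex.
From mathcomp Require Import Rstruct zify ring boolp.
From Stdlib Require Import ClassicalEpsilon.
Set Implicit Arguments. Unset Strict Implicit. Unset Printing Implicit Defensive.
Import Order.TTheory GRing.Theory Num.Theory.
Local Open Scope ring_scope.

Section ProductsOmittingOneIndex.
Variable R : comPzRingType.
Implicit Types (G : nat -> R) (c : R).

Lemma prod_omit_recr G k j : (j <= k)%N ->
  \prod_(l < k.+2 | (l : nat) != j) G l = (\prod_(l < k.+1 | (l : nat) != j) G l) * G k.+1.
Proof.
move=> jk; rewrite big_mkcond big_ord_recr /= ifT; last by apply/eqP; lia.
by rewrite -big_mkcond.
Qed.

Lemma prod_omit_recl G k j :
  \prod_(l < k.+2 | (l : nat) != j.+1) G l = G 0%N * \prod_(l < k.+1 | (l : nat) != j) G l.+1.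
Proof. by rewrite big_mkcond big_ord_recl /= -big_mkcond. Qed.

Lemma prod_omit_const c k j : (j <= k)%N -> \prod_(l < k.+1 | (l : nat) != j) c = c ^+ k.
Proof.
move=> jk; rewrite (eq_bigl (predC1 (inord j))) ?prodr_const ?cardC1 ?card_ord // => l.
by rewrite /= -val_eqE /= inordK.
Qed.

End ProductsOmittingOneIndex.

Section OperatorIdentity.
Variables (L : fieldType) (s : {rmorphism L -> L}) (X F P : L) (n : nat).
Hypothesis X_neq0 : X != 0.
Hypothesis XsF : X * s F + F = P.

Definition negXs (y : L) : L := - (X * s y).

Definition Pseq (j : nat) : L := \sum_(i < j) iter i negXs P.
Definition orbit (j : nat) : L := iter j negXs F.

Definition Acoef (k j : nat) : L := \prod_(l < k.+1 | (l : nat) != j) (Pseq j - Pseq l).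

Fixpoint Lfield (k : nat) (y : L) : L :=
  match k with
  | 0 => y
  | k'.+1 => (Pseq k'.+1)^-1 *
      (X ^+ (n - k')%N * s (Lfield k' y) - (-1) ^+ (n - k')%N * Lfield k' y)
  end.

Lemma iter_negXsB k a b : iter k negXs (a - b) = iter k negXs a - iter k negXs b.
Proof. by elim: k => [|k IH] //=; rewrite IH /negXs rmorphB mulrBr opprB opprK addrC. Qed.

Lemma Pseq0 : Pseq 0 = 0.
Proof. exact: big_ord0. Qed.

(* Since [P = F - (-X s) F], the sum defining [P_j] telescopes. *)
Lemma Pseq_orbit j : Pseq j = F - orbit j.
Proof.
elim: j => [|j IH]; first by rewrite Pseq0 subrr.
rewrite /Pseq big_ord_recr /= -/(Pseq j) IH.
have -> : P = F - negXs F by rewrite -XsF /negXs opprK addrC.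
by rewrite iter_negXsB /orbit -iterSr /=; ring.
Qed.

Lemma X_sigma_orbit j : X * s (orbit j) = - orbit j.+1.
Proof. by rewrite /orbit /= /negXs opprK. Qed.

Lemma X_sigma_Pdiff j l : X * s (Pseq j - Pseq l) = Pseq l.+1 - Pseq j.+1.
Proof. by rewrite !Pseq_orbit rmorphB mulrBr !rmorphB !mulrBr !X_sigma_orbit; ring. Qed.

Hypothesis Pseq_inj : injective Pseq.

Lemma Pdiff_neq0 j l : j != l -> Pseq j - Pseq l != 0.
Proof. by rewrite subr_eq0 (inj_eq Pseq_inj). Qed.

Lemma PseqS_neq0 j : Pseq j.+1 != 0.
Proof. by have := @Pdiff_neq0 j.+1 0%N isT; rewrite Pseq0 subr0. Qed.

Lemma Acoef_neq0 k j : Acoef k j != 0.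
Proof. by apply/prodf_neq0 => l lj; apply: Pdiff_neq0; rewrite eq_sym. Qed.

Lemma AcoefS k i : (i <= k)%N -> Acoef k.+1 i = Acoef k i * (Pseq i - Pseq k.+1).
Proof. by move=> ik; rewrite /Acoef (prod_omit_recr (fun l => Pseq i - Pseq l) ik). Qed.

Lemma sigma_Acoef k j : (j <= k)%N ->
  s (Acoef k j) * X ^+ k * Pseq j.+1 = (-1) ^+ k * Acoef k.+1 j.+1.
Proof.
move=> jk; rewrite /Acoef rmorph_prod -(prod_omit_const X jk) -big_split /=.
rewrite (prod_omit_recl (fun l => Pseq j.+1 - Pseq l)) Pseq0 subr0.
under eq_bigr => l _ do rewrite mulrC X_sigma_Pdiff -[Pseq l.+1 - _]opprB -mulN1r.
by rewrite big_split /= (prod_omit_const (-1) jk); ring.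
Qed.

Lemma X_sigma_term k j : (j <= k)%N -> (k <= n)%N ->
  X ^+ (n - k)%N * s ((Acoef k j)^-1 * orbit j ^+ n) =
  (-1) ^+ (n - k)%N * (Pseq j.+1 * (Acoef k.+1 j.+1)^-1 * orbit j.+1 ^+ n).
Proof.
move=> jk kn; have Pj := PseqS_neq0 j; have Aj := Acoef_neq0 k.+1 j.+1.
have Xk : X ^+ k != 0 by rewrite expf_neq0.
have Xnk : X ^+ (n - k)%N != 0 by rewrite expf_neq0.
have sgn : (-1) ^+ k != 0 :> L by rewrite signr_eq0.
have sA : s (Acoef k j) = (-1) ^+ k * Acoef k.+1 j.+1 / (X ^+ k * Pseq j.+1).
  by rewrite -sigma_Acoef //; field; rewrite Xk Pj.
have sg : s (orbit j) ^+ n =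
    (-1) ^+ (n - k)%N * (-1) ^+ k * orbit j.+1 ^+ n / (X ^+ (n - k)%N * X ^+ k).
  by rewrite -!exprD subnK // -exprNn -X_sigma_orbit exprMn; field; rewrite expf_neq0.
by rewrite rmorphM fmorphV rmorphXn sA sg; field; rewrite Aj sgn Xk Pj Xnk.
Qed.

(* Summing over [j]: the term [i = 0] of the right-hand side vanishes as [P_0 = 0]. *)
Lemma X_sigma_sum k : (k <= n)%N ->
  X ^+ (n - k)%N * \sum_(j < k.+1) s ((Acoef k j)^-1 * orbit j ^+ n) =
  (-1) ^+ (n - k)%N * \sum_(i < k.+2) Pseq i * (Acoef k.+1 i)^-1 * orbit i ^+ n.
Proof.
move=> kn; rewrite [in RHS]big_ord_recl Pseq0 !mul0r add0r !mulr_sumr.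
by apply: eq_bigr => j _; rewrite X_sigma_term ?leq_ord.
Qed.

Lemma partial_fraction_step k (w : nat -> L) :
  \sum_(i < k.+2) Pseq i * (Acoef k.+1 i)^-1 * w i - \sum_(i < k.+1) (Acoef k i)^-1 * w i =
  Pseq k.+1 * \sum_(i < k.+2) (Acoef k.+1 i)^-1 * w i.
Proof.
rewrite [in LHS]big_ord_recr [in RHS]big_ord_recr /= mulrDr addrAC -sumrB mulr_sumr.
rewrite mulrA; congr (_ + _); apply: eq_bigr => i _.
have ik : (i <= k)%N by have := ltn_ord i; lia.
have di : Pseq i - Pseq k.+1 != 0 by apply: Pdiff_neq0; apply/eqP; lia.
rewrite AcoefS //; field; by rewrite Acoef_neq0 di.
Qed.

(* The exponent [k(2n-k+1)/2 = n + (n-1) + ... + (n-k+1)] of the sign. *)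
Definition sign_exp (k : nat) : nat := (k * (2 * n - k + 1)) %/ 2.

Lemma sign_expS k : (k < n)%N -> sign_exp k.+1 = (sign_exp k + (n - k))%N.
Proof. by rewrite /sign_exp; nia. Qed.

Theorem Lfield_pow k : (k <= n)%N ->
  Lfield k (F ^+ n) =
  (-1) ^+ sign_exp k * \sum_(j < k.+1) (Acoef k j)^-1 * (F - Pseq j) ^+ n.
Proof.
have orbitE j : F - Pseq j = orbit j by rewrite Pseq_orbit opprB addrC subrK.
under eq_bigr => j _ do rewrite orbitE.
elim: k => [|k IH] kn.
  by rewrite /sign_exp /= expr0 mul1r big_ord1 /Acoef big_mkcond big_ord1 /= invr1 mul1r.
rewrite /= IH; last by lia.
rewrite sign_expS // rmorphM rmorph_sign rmorph_sum mulrCA.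
rewrite X_sigma_sum; last by lia.
have := partial_fraction_step k (fun i => orbit i ^+ n).
move/(canRL (subrK _)) => ->; rewrite exprD.
by field; rewrite PseqS_neq0.
Qed.

End OperatorIdentity.

Section LaurentArithmetic.
Variable K : fieldType.
Implicit Types (f g h : lseries K) (a b c m : int).

Definition vanishes_below f a := forall m, m < a -> f m = 0.

Lemma lbound_vanishes f : is_laurent f -> vanishes_below f (lbound f).
Proof.
rewrite /lbound; case: excluded_middle_informative => [H|//] _.
by case: (constructive_indefinite_description _ H).
Qed.

Lemma vanishes_below_le f a b : vanishes_below f a -> b <= a -> vanishes_below f b.
Proof. by move=> fa ba m mb; apply: fa; apply: lt_le_trans mb ba. Qed.

Lemma int_split m a : m < a \/ exists t : nat, m = a + t%:Z.
Proof.
case: (ltrP m a) => h; [by left|right].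
by exists `|m - a|%N; rewrite gez0_abs ?subr_ge0 //; ring.
Qed.

(* The Cauchy product, with the two lower bounds as parameters. *)
Definition conv a b f g m : K :=
  if a + b <= m then
    \sum_(i < (absz (m - a - b)%R).+1) f (a + i%:Z) * g (m - a - i%:Z)
  else 0.

Lemma conv_eq a b f g (t : nat) :
  conv a b f g (a + b + t%:Z) = \sum_(i < t.+1) f (a + i%:Z) * g (b + t%:Z - i%:Z).
Proof.
rewrite /conv ifT; last by lia.
have -> : a + b + t%:Z - a - b = t%:Z by ring.
by rewrite absz_nat; apply: eq_bigr => i _; congr (_ * g _); ring.
Qed.

Lemma conv_lt a b f g m : m < a + b -> conv a b f g m = 0.
Proof. by rewrite /conv ltNge => /negbTE ->. Qed.

Lemma conv_stepl a b f g : f a = 0 -> conv a b f g = conv (a + 1) b f g.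
Proof.
move=> fa; apply: funext => m.
case: (int_split m (a + b)) => [lt|[t ->]]; first by rewrite !conv_lt //; lia.
rewrite conv_eq; case: t => [|t].
  by rewrite big_ord1 addr0 fa mul0r conv_lt //; lia.
have -> : a + b + t.+1%:Z = (a + 1) + b + t%:Z by lia.
rewrite conv_eq big_ord_recl /= addr0 fa mul0r add0r.
by apply: eq_bigr => i _; rewrite /bump /=; congr (f _ * g _); lia.
Qed.

Lemma conv_stepr a b f g : g b = 0 -> conv a b f g = conv a (b + 1) f g.
Proof.
move=> gb; apply: funext => m.
case: (int_split m (a + b)) => [lt|[t ->]]; first by rewrite !conv_lt //; lia.
rewrite conv_eq; case: t => [|t].
  rewrite big_ord1 conv_lt; last by lia.
  have -> : b + 0%:Z - 0%:Z = b by lia.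
  by rewrite gb mulr0.
have -> : a + b + t.+1%:Z = a + (b + 1) + t%:Z by lia.
rewrite conv_eq big_ord_recr /=.
have -> : b + t.+1%:Z - t.+1%:Z = b by lia.
by rewrite gb mulr0 addr0; apply: eq_bigr => i _; congr (f _ * g _); lia.
Qed.

Lemma conv_shiftl a b f g (d : nat) :
  vanishes_below f (a + d%:Z) -> conv a b f g = conv (a + d%:Z) b f g.
Proof.
elim: d => [|d IH] fd; first by rewrite addr0.
rewrite IH; last by apply: (vanishes_below_le fd); lia.
by rewrite conv_stepl; [congr conv; lia | apply: fd; lia].
Qed.

Lemma conv_shiftr a b f g (d : nat) :
  vanishes_below g (b + d%:Z) -> conv a b f g = conv a (b + d%:Z) f g.
Proof.
elim: d => [|d IH] gd; first by rewrite addr0.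
rewrite IH; last by apply: (vanishes_below_le gd); lia.
by rewrite conv_stepr; [congr conv; lia | apply: gd; lia].
Qed.

Lemma conv_indep a b a' b' f g :
  vanishes_below f a -> vanishes_below f a' -> vanishes_below g b -> vanishes_below g b' ->
  conv a b f g = conv a' b' f g.
Proof.
have shift c c' : c <= c' -> c' = c + `|c' - c|%N%:Z.
  by move=> le; rewrite gez0_abs ?subr_ge0 //; ring.
move=> fa fa' gb gb'; transitivity (conv a b' f g).
  case: (lerP b b') => h.
    by rewrite [in RHS](shift _ _ h) -conv_shiftr // -(shift _ _ h).
  by rewrite [in LHS](shift _ _ (ltW h)) -conv_shiftr // -(shift _ _ (ltW h)).
case: (lerP a a') => h.
  by rewrite [in RHS](shift _ _ h) -conv_shiftl // -(shift _ _ h).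
by rewrite [in LHS](shift _ _ (ltW h)) -conv_shiftl // -(shift _ _ (ltW h)).
Qed.

Lemma lmul_conv f g a b : is_laurent f -> is_laurent g ->
  vanishes_below f a -> vanishes_below g b -> lmul f g = conv a b f g.
Proof.
move=> lf lg fa gb; apply: conv_indep => //; exact: lbound_vanishes.
Qed.

Lemma lmul_coef f g a b (t : nat) : is_laurent f -> is_laurent g ->
  vanishes_below f a -> vanishes_below g b ->
  lmul f g (a + b + t%:Z) = \sum_(i < t.+1) f (a + i%:Z) * g (b + t%:Z - i%:Z).
Proof. by move=> lf lg fa gb; rewrite (lmul_conv lf lg fa gb) conv_eq. Qed.

Lemma lmul_vanishes f g a b : is_laurent f -> is_laurent g ->
  vanishes_below f a -> vanishes_below g b -> vanishes_below (lmul f g) (a + b).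
Proof. by move=> lf lg fa gb m mlt; rewrite (lmul_conv lf lg fa gb) conv_lt. Qed.

Lemma lmul_laurent f g : is_laurent f -> is_laurent g -> is_laurent (lmul f g).
Proof.
move=> lf lg; exists (lbound f + lbound g).
by apply: lmul_vanishes => //; apply: lbound_vanishes.
Qed.

(* The coefficients of [f] at [a, a + M) as a polynomial: a truncation of
   [x^-a f], which turns products of Laurent series into products of polynomials. *)
Definition trunc_poly a (M : nat) f : {poly K} := \poly_(i < M) f (a + i%:Z).

Lemma lmul_trunc_poly f g a b (M t : nat) : is_laurent f -> is_laurent g ->
  vanishes_below f a -> vanishes_below g b ->
  (t < M)%N -> lmul f g (a + b + t%:Z) = (trunc_poly a M f * trunc_poly b M g)`_t.
Proof.
move=> lf lg fa gb tM; rewrite lmul_coef // coefM; apply: eq_bigr => i _.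
have it := ltn_ord i.
rewrite !coef_poly ifT; last by lia.
by rewrite ifT; [congr (_ * g _); lia | lia].
Qed.

Lemma trunc_poly_lmul f g a b (M i : nat) : is_laurent f -> is_laurent g ->
  vanishes_below f a -> vanishes_below g b ->
  (i < M)%N -> (trunc_poly (a + b) M (lmul f g))`_i = (trunc_poly a M f * trunc_poly b M g)`_i.
Proof. by move=> lf lg fa gb iM; rewrite coef_poly iM (@lmul_trunc_poly _ _ _ _ M). Qed.

Lemma coefM_low (p p' r r' : {poly K}) (t : nat) :
  (forall i, (i <= t)%N -> p`_i = p'`_i) -> (forall i, (i <= t)%N -> r`_i = r'`_i) ->
  (p * r)`_t = (p' * r')`_t.
Proof.
move=> hp hr; rewrite !coefM; apply: eq_bigr => i _.
by have it := ltn_ord i; rewrite hp ?hr //; lia.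
Qed.

(* Commutativity and associativity hold coefficientwise, via [trunc_poly]. *)
Lemma lmulC f g : is_laurent f -> is_laurent g -> lmul f g = lmul g f.
Proof.
move=> lf lg; apply: funext => m.
have fa := lbound_vanishes lf; have gb := lbound_vanishes lg.
set a := lbound f in fa *; set b := lbound g in gb *.
case: (int_split m (a + b)) => [lt|[t ->]].
  by rewrite (lmul_vanishes lf lg fa gb) // (lmul_vanishes lg lf gb fa) //; lia.
rewrite (@lmul_trunc_poly _ _ _ _ t.+1) // mulrC.
by rewrite (addrC a b) (@lmul_trunc_poly _ _ _ _ t.+1).
Qed.

Lemma lmulA f g h : is_laurent f -> is_laurent g -> is_laurent h ->
  lmul (lmul f g) h = lmul f (lmul g h).
Proof.
move=> lf lg lh; apply: funext => m.
have fa := lbound_vanishes lf; have gb := lbound_vanishes lg.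
have hc := lbound_vanishes lh.
set a := lbound f in fa *; set b := lbound g in gb *; set c := lbound h in hc *.
have lfg := lmul_laurent lf lg; have lgh := lmul_laurent lg lh.
have fgab := lmul_vanishes lf lg fa gb; have ghbc := lmul_vanishes lg lh gb hc.
case: (int_split m (a + b + c)) => [lt|[t ->]].
  by rewrite (lmul_vanishes lfg lh fgab hc) // (lmul_vanishes lf lgh fa ghbc) //; lia.
rewrite (@lmul_trunc_poly _ _ _ _ t.+1) //.
have -> : a + b + c + t%:Z = a + (b + c) + t%:Z by ring.
rewrite (@lmul_trunc_poly _ _ _ _ t.+1) //.
set pf := trunc_poly a t.+1 f; set pg := trunc_poly b t.+1 g; set ph := trunc_poly c t.+1 h.
transitivity ((pf * pg * ph)`_t).
  by apply: coefM_low => // i it; rewrite trunc_poly_lmul.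
by rewrite -mulrA; apply: coefM_low => // i it; rewrite trunc_poly_lmul.
Qed.

Lemma ladd_laurent f g : is_laurent f -> is_laurent g -> is_laurent (ladd f g).
Proof.
move=> [a fa] [b gb]; exists (Num.min a b) => m.
by rewrite lt_min => /andP[ma mb]; rewrite /ladd fa ?gb ?addr0.
Qed.

Lemma lmulDl f g h : is_laurent f -> is_laurent g -> is_laurent h ->
  lmul (ladd f g) h = ladd (lmul f h) (lmul g h).
Proof.
move=> lf lg lh; apply: funext => m.
pose a := Num.min (lbound f) (lbound g).
have fa : vanishes_below f a.
  by apply: (vanishes_below_le (lbound_vanishes lf)); rewrite ge_min lexx.
have ga : vanishes_below g a.
  by apply: (vanishes_below_le (lbound_vanishes lg)); rewrite ge_min lexx orbT.
have fga : vanishes_below (ladd f g) a by move=> i ia; rewrite /ladd fa ?ga ?addr0.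
have hb := lbound_vanishes lh.
rewrite /ladd (lmul_conv (ladd_laurent lf lg) lh fga hb).
rewrite (lmul_conv lf lh fa hb) (lmul_conv lg lh ga hb) /conv.
case: ifP => _; last by rewrite addr0.
by rewrite -big_split /=; apply: eq_bigr => i _; rewrite mulrDl.
Qed.

Lemma lone_vanishes : vanishes_below (lone K) 0.
Proof. by move=> m m0; rewrite /lone /lconst ifF //; apply/negbTE; rewrite lt_eqF. Qed.

Lemma lone_laurent : is_laurent (lone K).
Proof. by exists 0; apply: lone_vanishes. Qed.

Lemma lmul1 f : is_laurent f -> lmul (lone K) f = f.
Proof.
move=> lf; apply: funext => m.
have fb := lbound_vanishes lf; set b := lbound f in fb *.
case: (int_split m (0 + b)) => [lt|[t ->]].
  by rewrite (lmul_vanishes lone_laurent lf lone_vanishes fb) // fb //; rewrite add0r in lt.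
rewrite (lmul_coef _ lone_laurent lf lone_vanishes fb) big_ord_recl big1 ?addr0.
  by rewrite /lone /lconst /= mul1r add0r.
by move=> i _; rewrite /lone /lconst /= mul0r.
Qed.

Lemma lzero_laurent : is_laurent (lzero K).
Proof. by exists 0. Qed.

Lemma lopp_laurent f : is_laurent f -> is_laurent (lopp f).
Proof. by move=> [a fa]; exists a => m ma; rewrite /lopp fa ?oppr0. Qed.

Lemma lsigma_laurent (q : K) f : is_laurent f -> is_laurent (lsigma q f).
Proof. by move=> [a fa]; exists a => m ma; rewrite /lsigma fa ?mulr0. Qed.

Lemma lxpow_laurent c : is_laurent (lxpow K c).
Proof. by exists c => m mc; rewrite /lxpow ifF //; apply/negbTE; rewrite lt_eqF. Qed.

Lemma lmulX_coef h m : is_laurent h -> lmul (lX K) h m = h (m - 1).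
Proof.
move=> lh; have hb := lbound_vanishes lh; set b := lbound h in hb *.
have X1 : vanishes_below (lX K) 1.
  by move=> i i1; rewrite /lX /lxpow ifF //; apply/negbTE; rewrite lt_eqF.
case: (int_split m (1 + b)) => [lt|[t ->]].
  by rewrite (lmul_vanishes (lxpow_laurent _) lh X1 hb) // hb //; lia.
rewrite (lmul_coef _ (lxpow_laurent _) lh X1 hb) big_ord_recl big1.
  by rewrite /lX /lxpow /= mul1r addr0; congr h; lia.
by move=> i _; rewrite /lxpow /= mul0r.
Qed.

Lemma valuation_exists f : is_laurent f -> f <> lzero K ->
  exists v, vanishes_below f v /\ f v != 0.
Proof.
move=> [N fN] fnz.
have [m fm] : exists m, f m != 0.
  apply: contra_notP fnz => nz; apply: funext => m.
  by apply/eqP; apply: contra_notP nz => fm; exists m; apply/negP.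
have mN : N <= m by rewrite leNgt; apply/negP => /fN; apply/eqP.
have ex : exists k : nat, f (N + k%:Z) != 0.
  by exists `|m - N|%N; rewrite gez0_abs ?subr_ge0 // addrCA subrr addr0.
case: (ex_minnP ex) => k0 fk0 kmin; exists (N + k0%:Z); split => // i ilt.
case: (int_split i N) => [/fN //|[j ei]]; rewrite ei in ilt *.
by apply/eqP; apply: contraTT ilt => /kmin k0j; rewrite -leNgt lerD2l lez_nat.
Qed.

Fixpoint inv_coefs (u : nat -> K) (t : nat) : seq K :=
  match t with
  | 0 => [:: (u 0%N)^-1]
  | t'.+1 => rcons (inv_coefs u t') (- (u 0%N)^-1 *
       \sum_(i < t'.+1) u i.+1 * nth 0 (inv_coefs u t') (t' - i))
  end.

Definition inv_coef u t := nth 0 (inv_coefs u t) t.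

Lemma size_inv_coefs u t : size (inv_coefs u t) = t.+1.
Proof. by elim: t => [|t IH] //=; rewrite size_rcons IH. Qed.

Lemma nth_inv_coefs u t i : (i <= t)%N -> nth 0 (inv_coefs u t) i = inv_coef u i.
Proof.
elim: t => [|t IH] it; first by have -> : i = 0%N by lia.
case: (ltnP i t.+1) => h; last by have -> : i = t.+1 by lia.
by rewrite /= nth_rcons size_inv_coefs h IH //; lia.
Qed.

Lemma inv_coefS u t :
  inv_coef u t.+1 = - (u 0%N)^-1 * \sum_(i < t.+1) u i.+1 * inv_coef u (t - i).
Proof.
rewrite /inv_coef /= nth_rcons size_inv_coefs ltnn eqxx; congr (_ * _).
by apply: eq_bigr => i _; rewrite nth_inv_coefs //; lia.
Qed.

Lemma inv_coefP u t : u 0%N != 0 ->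
  \sum_(i < t.+1) u i * inv_coef u (t - i) = (t == 0%N)%:R.
Proof.
move=> u0; case: t => [|t]; first by rewrite big_ord1 /inv_coef /= mulfV.
rewrite big_ord_recl /= subn0 inv_coefS.
under eq_bigr => i _ do rewrite /bump /= add1n subSS.
by field.
Qed.

Definition inv_series f v (m : int) : K :=
  if - v <= m then inv_coef (fun i => f (v + i%:Z)) (absz (m + v)) else 0.

Lemma inv_series_vanishes f v : vanishes_below (inv_series f v) (- v).
Proof. by move=> m mv; rewrite /inv_series ifF //; apply/negbTE; rewrite -ltNge. Qed.

Lemma inv_seriesP f v : is_laurent f -> vanishes_below f v -> f v != 0 ->
  lmul f (inv_series f v) = lone K.
Proof.
move=> lf fv f0.
have lg : is_laurent (inv_series f v) by exists (- v); apply: inv_series_vanishes.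
apply: funext => m.
case: (int_split m (v + - v)) => [lt|[t ->]].
  rewrite (lmul_vanishes lf lg fv (@inv_series_vanishes f v)) // /lone /lconst ifF //.
  by apply/negbTE; move: lt; rewrite subrr => /lt_eqF ->.
rewrite (lmul_coef _ lf lg fv (@inv_series_vanishes f v)).
rewrite (eq_bigr (fun i : 'I_t.+1 => f (v + i%:Z) * inv_coef (fun i => f (v + i%:Z)) (t - i))).
  by rewrite inv_coefP ?addr0 // /lone /lconst subrr add0r; case: t.
move=> i _; rewrite /inv_series ifT; last by have := ltn_ord i; lia.
have -> : - v + t%:Z - i%:Z + v = (t - i)%N%:Z by have := ltn_ord i; lia.
by rewrite absz_nat.
Qed.

Lemma linv_laurent f : is_laurent (linv f).
Proof.
rewrite /linv; case: excluded_middle_informative => [H|_]; last exact: lzero_laurent.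
by case: (constructive_indefinite_description _ H) => g [].
Qed.

Lemma linvP f : is_laurent f -> f <> lzero K -> lmul f (linv f) = lone K.
Proof.
move=> lf fnz; rewrite /linv; case: excluded_middle_informative => [H|[]].
  by case: (constructive_indefinite_description _ H) => g [].
have [v [fv f0]] := valuation_exists lf fnz.
exists (inv_series f v); split; last exact: inv_seriesP.
by exists (- v); apply: inv_series_vanishes.
Qed.

Lemma lmul0 g : is_laurent g -> lmul (lzero K) g = lzero K.
Proof.
move=> lg; apply: funext => m.
rewrite (@lmul_conv _ _ 0 _ lzero_laurent lg (fun _ _ => erefl) (lbound_vanishes lg)) /conv.
by case: ifP => // _; rewrite big1 // => i _; rewrite mul0r.
Qed.

Lemma lone_neq0 : lone K <> lzero K.
Proof.
by move=> /(congr1 (fun f => f 0)) /eqP; rewrite /lone /lconst /lzero eqxx oner_eq0.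
Qed.

Lemma linv0 : linv (lzero K) = lzero K.
Proof.
rewrite /linv; case: excluded_middle_informative => [H|//]; exfalso.
by case: H => g [lg]; rewrite lmul0 // => /esym /lone_neq0.
Qed.

End LaurentArithmetic.

Record laurent (K : fieldType) := Laurent { coefs : lseries K ; coefsP : is_laurent coefs }.

HB.instance Definition _ (K : fieldType) := gen_eqMixin (laurent K).
HB.instance Definition _ (K : fieldType) := gen_choiceMixin (laurent K).

Section LaurentField.
Variable K : fieldType.
Implicit Types (x y z : laurent K).

Lemma coefs_inj : injective (@coefs K).
Proof. by case=> x px [y py] /= exy; subst y; rewrite (Prop_irrelevance px py). Qed.

Definition laurent0 := Laurent (lzero_laurent K).
Definition laurent1 := Laurent (lone_laurent K).
Definition laurent_add x y := Laurent (ladd_laurent (coefsP x) (coefsP y)).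
Definition laurent_opp x := Laurent (lopp_laurent (coefsP x)).
Definition laurent_mul x y := Laurent (lmul_laurent (coefsP x) (coefsP y)).
Definition laurent_inv x := Laurent (linv_laurent (coefs x)).

Lemma laurent_ext x y : coefs x =1 coefs y -> x = y.
Proof. by move=> exy; apply: coefs_inj; apply: funext. Qed.

Lemma laurent_addA : associative laurent_add.
Proof. by move=> x y z; apply: laurent_ext => m; rewrite /= /ladd addrA. Qed.
Lemma laurent_addC : commutative laurent_add.
Proof. by move=> x y; apply: laurent_ext => m; rewrite /= /ladd addrC. Qed.
Lemma laurent_add0 : left_id laurent0 laurent_add.
Proof. by move=> x; apply: laurent_ext => m; rewrite /= /ladd /lzero add0r. Qed.
Lemma laurent_addN : left_inverse laurent0 laurent_opp laurent_add.
Proof. by move=> x; apply: laurent_ext => m; rewrite /= /ladd /lopp /lzero addNr. Qed.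

HB.instance Definition _ :=
  GRing.isZmodule.Build (laurent K) laurent_addA laurent_addC laurent_add0 laurent_addN.

Lemma laurent_mulA : associative laurent_mul.
Proof. by move=> x y z; apply: coefs_inj; rewrite /= lmulA //; apply: coefsP. Qed.
Lemma laurent_mulC : commutative laurent_mul.
Proof. by move=> x y; apply: coefs_inj; rewrite /= lmulC //; apply: coefsP. Qed.
Lemma laurent_mul1 : left_id laurent1 laurent_mul.
Proof. by move=> x; apply: coefs_inj; rewrite /= lmul1 //; apply: coefsP. Qed.
Lemma laurent_mulDl : left_distributive laurent_mul +%R.
Proof. by move=> x y z; apply: coefs_inj; rewrite /= lmulDl //; apply: coefsP. Qed.
Lemma laurent1_neq0 : laurent1 != 0.
Proof. by apply/eqP => /(congr1 (@coefs K)); apply: lone_neq0. Qed.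

HB.instance Definition _ := GRing.Zmodule_isComNzRing.Build (laurent K)
  laurent_mulA laurent_mulC laurent_mul1 laurent_mulDl laurent1_neq0.

Lemma laurent_mulVf x : x != 0 -> laurent_mul (laurent_inv x) x = 1.
Proof.
move=> xnz; apply: coefs_inj => /=.
rewrite lmulC ?linvP //; [exact: coefsP | | exact: linv_laurent | exact: coefsP].
by move=> x0; move/eqP: xnz; apply; apply: coefs_inj.
Qed.

Lemma laurent_inv0 : laurent_inv 0 = 0.
Proof. by apply: coefs_inj; rewrite /= linv0. Qed.

HB.instance Definition _ :=
  GRing.ComNzRing_isField.Build (laurent K) laurent_mulVf laurent_inv0.

Lemma coefsD x y : coefs (x + y) = ladd (coefs x) (coefs y). Proof. by []. Qed.
Lemma coefsN x : coefs (- x) = lopp (coefs x). Proof. by []. Qed.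
Lemma coefsM x y : coefs (x * y) = lmul (coefs x) (coefs y). Proof. by []. Qed.
Lemma coefsV x : coefs x^-1 = linv (coefs x). Proof. by []. Qed.

Lemma coefsX x m : coefs (x ^+ m) = lpow (coefs x) m.
Proof. by elim: m => [|m IH] //=; rewrite exprS coefsM IH. Qed.

Lemma coefs_sum (I : Type) (r : seq I) (p : pred I) (F : I -> laurent K) :
  coefs (\sum_(i <- r | p i) F i) = \big[@ladd K/lzero K]_(i <- r | p i) coefs (F i).
Proof. exact: (big_morph _ coefsD (erefl : coefs 0 = lzero K)). Qed.

Lemma coefs_prod (I : Type) (r : seq I) (p : pred I) (F : I -> laurent K) :
  coefs (\prod_(i <- r | p i) F i) = \big[@lmul K/lone K]_(i <- r | p i) coefs (F i).
Proof. exact: (big_morph _ coefsM (erefl : coefs 1 = lone K)). Qed.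

Lemma coefs_sign m x : coefs ((-1) ^+ m * x) = lscale ((-1) ^+ m) (coefs x).
Proof.
elim: m => [|m IH]; first by apply: funext => i; rewrite !expr0 mul1r /lscale mul1r.
by apply: funext => i; rewrite !exprS !mulN1r mulNr coefsN IH /lopp /lscale mulNr.
Qed.

End LaurentField.

Section QShift.
Variables (K : fieldType) (q : K).
Hypothesis q_neq0 : q != 0.
Implicit Types (f g : lseries K) (x y : laurent K).

(* [sigma_q] is multiplicative on Laurent series: coefficientwise,
   [q^(i+j) = q^i q^j] with integer exponents, which needs [q != 0]. *)
Lemma lsigma_mul f g : is_laurent f -> is_laurent g ->
  lsigma q (lmul f g) = lmul (lsigma q f) (lsigma q g).
Proof.
move=> lf lg; apply: funext => m.
have fa := lbound_vanishes lf; have gb := lbound_vanishes lg.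
set a := lbound f in fa *; set b := lbound g in gb *.
have lsf := lsigma_laurent q lf; have lsg := lsigma_laurent q lg.
have sfa : vanishes_below (lsigma q f) a by move=> i ia; rewrite /lsigma fa ?mulr0.
have sgb : vanishes_below (lsigma q g) b by move=> i ib; rewrite /lsigma gb ?mulr0.
case: (int_split m (a + b)) => [lt|[t ->]].
  by rewrite /lsigma (lmul_vanishes lf lg fa gb) // (lmul_vanishes lsf lsg sfa sgb) // mulr0.
rewrite /lsigma (lmul_coef _ lf lg fa gb) (lmul_coef _ lsf lsg sfa sgb) mulr_sumr.
apply: eq_bigr => i _; rewrite /lsigma.
have -> : a + b + t%:Z = (a + i%:Z) + (b + t%:Z - i%:Z) by ring.
by rewrite expfzDr //; ring.
Qed.

Definition qshift x : laurent K := Laurent (lsigma_laurent q (coefsP x)).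

Lemma qshift_zmod_morphism : zmod_morphism qshift.
Proof.
by move=> x y; apply: laurent_ext => m; rewrite /= /lsigma /ladd /lopp mulrDr mulrN.
Qed.

Lemma qshift_monoid_morphism : monoid_morphism qshift.
Proof.
split; last by move=> x y; apply: coefs_inj; rewrite /= lsigma_mul //; apply: coefsP.
apply: laurent_ext => m; rewrite /= /lsigma /lone /lconst.
by case: eqP => [->|_]; rewrite ?mulr0 ?mulr1.
Qed.

HB.instance Definition _ :=
  GRing.isZmodMorphism.Build (laurent K) (laurent K) qshift qshift_zmod_morphism.
HB.instance Definition _ :=
  GRing.isMonoidMorphism.Build (laurent K) (laurent K) qshift qshift_monoid_morphism.

Definition xL : laurent K := Laurent (lxpow_laurent K 1).

Lemma xL_neq0 : xL != 0.
Proof.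
by apply/eqP => /(congr1 (fun x => coefs x 1)) /eqP; rewrite /= /lxpow eqxx oner_eq0.
Qed.

Lemma coefs_xLX (m : nat) : coefs (xL ^+ m) = lxpow K m%:Z.
Proof.
elim: m => [|m IH]; first by apply: funext => i; rewrite expr0 /lxpow /= /lone /lconst.
apply: funext => i; rewrite exprS coefsM IH lmulX_coef; last exact: lxpow_laurent.
by rewrite /lxpow; congr (if _ then _ else _); apply/eqP/eqP; lia.
Qed.

Lemma coefs_negXs y : coefs (negXs qshift xL y) = lnegxsigma q (coefs y).
Proof. by []. Qed.

Lemma orbit_coef F j m : exists2 c : K, c != 0 &
  coefs (orbit qshift xL F j) m = c * coefs F (m - j%:Z).
Proof.
elim: j m => [|j IH] m; first by exists 1; rewrite ?oner_eq0 // mul1r subr0.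
have [c c0 E] := IH (m - 1); exists (- q ^ (m - 1) * c).
  by rewrite mulf_neq0 // oppr_eq0 expfz_neq0.
rewrite /orbit iterS -/(orbit qshift xL F j) coefs_negXs /lnegxsigma /lopp.
rewrite lmulX_coef; last exact/lsigma_laurent/coefsP.
by rewrite /lsigma E !mulNr mulrA; congr (- (_ * coefs F _)); lia.
Qed.

(* Hence the iterates of a nonzero [F] under [-x sigma_q] are pairwise distinct:
   [(-x sigma_q)^j F] has valuation [v(F) + j]. *)
Lemma orbit_inj F : F != 0 -> injective (orbit qshift xL F).
Proof.
move=> F0; have [v [Fv Fv0]] : exists v, vanishes_below (coefs F) v /\ coefs F v != 0.
  apply: valuation_exists; first exact: coefsP.
  by move=> F0'; move/eqP: F0; apply; apply: coefs_inj.
suff lt_neq l j : (l < j)%N -> orbit qshift xL F l != orbit qshift xL F j.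
  move=> l j Elj; apply/eqP; case: ltngtP => // lj.
    by move: (lt_neq _ _ lj); rewrite Elj eqxx.
  by move: (lt_neq _ _ lj); rewrite Elj eqxx.
move=> lj; apply/eqP => /(congr1 (fun x => coefs x (v + l%:Z))).
have [c c0 ->] := orbit_coef F l (v + l%:Z); have [c' _ ->] := orbit_coef F j (v + l%:Z).
rewrite (Fv (v + l%:Z - j%:Z)); last by lia.
have -> : v + l%:Z - l%:Z = v by ring.
by rewrite mulr0 => /eqP; rewrite mulf_eq0 (negbTE c0) (negbTE Fv0).
Qed.

Lemma coefs_iter_negXs i y :
  coefs (iter i (negXs qshift xL) y) = iter i (lnegxsigma q) (coefs y).
Proof. by elim: i => //= i <-. Qed.

Lemma coefs_Pseq P m : Pm q (coefs P) m = coefs (Pseq qshift xL P m).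
Proof.
case: m => [|[|m]]; [by rewrite /Pseq big_ord0 | by rewrite /Pseq big_ord1 |].
by rewrite /Pseq coefs_sum; apply: eq_bigr => i _; rewrite coefs_iter_negXs.
Qed.

Lemma coefs_Acoef P k j : Akj q (coefs P) k j = coefs (Acoef qshift xL P k j).
Proof. by rewrite /Acoef coefs_prod; apply: eq_bigr => l _; rewrite !coefs_Pseq. Qed.

Lemma coefs_Lfield P n k y :
  Lop q (coefs P) n k (coefs y) = coefs (Lfield qshift xL P n k y).
Proof. by elim: k => [|k IH] //=; rewrite IH /Lstep coefs_Pseq -coefs_xLX -coefs_sign. Qed.

Theorem Lop_pow (P f : lseries K) (n k : nat) :
  is_laurent P -> is_laurent f -> P <> lzero K ->
  ladd (lmul (lX K) (lsigma q f)) f = P -> (k <= n)%N ->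
  Lop q P n k (lpow f n) =
  lscale ((-1) ^+ ((k * (2 * n - k + 1)) %/ 2))
    (\big[@ladd K/lzero K]_(j < k.+1)
        lmul (linv (Akj q P k j)) (lpow (ladd f (lopp (Pm q P j))) n)).
Proof.
move=> lP lf P0 XsF kn; pose Pl := Laurent lP; pose Fl := Laurent lf.
have XsFl : xL * qshift Fl + Fl = Pl by apply: coefs_inj.
have Fl0 : Fl != 0.
  apply: contra_notN P0 => /eqP Fl0; move: XsFl.
  by rewrite Fl0 rmorph0 mulr0 addr0 => /(congr1 (@coefs K)) /= <-.
have Pinj : injective (Pseq qshift xL Pl).
  by move=> j l; rewrite !(Pseq_orbit XsFl) => /addrI /oppr_inj /(orbit_inj Fl0).
change f with (coefs Fl); change P with (coefs Pl).
rewrite -coefsX coefs_Lfield (Lfield_pow xL_neq0 XsFl Pinj kn) coefs_sign coefs_sum.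
congr lscale; apply: eq_bigr => j _.
by rewrite coefsM coefsV coefsX coefs_Acoef coefs_Pseq.
Qed.

End QShift.

Unset Implicit Arguments.
Set Strict Implicit.

(* Lemma 1 is the case [K = C]. *)
Theorem lemma1 (q : Cplx) (P f : lseries Cplx) (n k : nat) :
  q != 0 ->
  is_laurent P -> is_laurent f -> P <> lzero Cplx ->
  ladd (lmul (lX Cplx) (lsigma q f)) f = P ->
  (1 <= k <= n)%N ->
  Lop q P n k (lpow f n) =
  lscale ((-1) ^+ ((k * (2 * n - k + 1)) %/ 2))
    (\big[@ladd Cplx/lzero Cplx]_(j < k.+1)
        lmul (linv (Akj q P k j)) (lpow (ladd f (lopp (Pm q P j))) n)).
Proof. by move=> q0 lP lf P0 XsF /andP[_ kn]; apply: Lop_pow. Qed.
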